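(* Let $\mathcal{L}_1,\mathcal{L}_2$ be objects of $\mathbf{Cal^0_{Sym}}$ that are DAC-lattices, and let $f\in\mathbf{Cal^0_{Sym}}(\mathcal{L}_1,\mathcal{L}_2^{\mathrm{op}})$ be such that $f(\mathcal{L}_1)$ has length $2$. Then the coatom $X:=\bigcup\{\{p\}\times\Sigma[f(p)]\,;\,p\in\Sigma_1\}$ of $\mathcal{L}_1\circledast\mathcal{L}_2$ (where $f(p)$ is regarded as an element of $\mathcal{L}_2$) is a $\ast$-coatom, i.e. there exist distinct coatoms $x_1,y_1$ of $\mathcal{L}_1$, distinct coatoms $x_2,y_2$ of $\mathcal{L}_2$ and a bijection $h:\Sigma'[x_1\wedge y_1]\to\Sigma'[x_2\wedge y_2]$ such that $X=\bigcup\{\Sigma[z]\times\Sigma[h(z)];z\in\Sigma'[x_1\wedge y_1]\}$.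
   Context: Lattice notation: $\Sigma_i,\Sigma_i'$ atoms and coatoms; $\Sigma[a]$ atoms below $a$, $\Sigma'[a]$ coatoms above $a$; $\mathsf{Cl}(\omega)=\{\Sigma[a];a\in\omega\}$; $\mathcal{L}^{\mathrm{op}}$ the dual lattice; $f^\circ(b):=\bigvee\{a;f(a)\le b\}$. A DAC-lattice is a lattice with $0,1$ such that $\mathcal{L}$ and $\mathcal{L}^{\mathrm{op}}$ are atomistic with the covering property. $\mathbf{Cal^0_{Sym}}$: objects are complete atomistic coatomistic lattices with $\Sigma[x]\cup\Sigma[y]\ne\Sigma$ for all coatoms $x,y$ and $\Sigma'[p]\cup\Sigma'[q]\ne\Sigma'$ for all atoms $p,q$; arrows preserve arbitrary joins, send atoms to atoms or $0$, with $f^\circ$ sending coatoms to coatoms or $1$. $\Sigma'_\circledast$ is the set of $R\subsetneqq\Sigma_1\times\Sigma_2$ such that for all $(p_1,p_2)$, $\{q_1;(q_1,p_2)\in R\}\in\mathsf{Cl}(\Sigma_1'\cup\{1\})$ and $\{q_2;(p_1,q_2)\in R\}\in\mathsf{Cl}(\Sigma_2'\cup\{1\})$; $\mathcal{L}_1\circledast\mathcal{L}_2:=\{\bigcap\omega;\omega\subseteq\Sigma'_\circledast\cup\{\Sigma_1\times\Sigma_2\}\}$. The length of a subset is the supremum of lengths of its chains (a chain $c_0<\dots<c_n$ has length $n$). *)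

Set Implicit Arguments.

Section LatticeNotions.
Variable T : Type.
Variable le : T -> T -> Prop.

Definition dual : T -> T -> Prop := fun a b => le b a.

Definition partial_order : Prop :=
  (forall a, le a a) /\ (forall a b c, le a b -> le b c -> le a c) /\
  (forall a b, le a b -> le b a -> a = b).

Definition lt (a b : T) : Prop := le a b /\ a <> b.

Definition is_lub (S : T -> Prop) (s : T) : Prop :=
  (forall x, S x -> le x s) /\ (forall y, (forall x, S x -> le x y) -> le s y).

Definition complete : Prop := forall S : T -> Prop, exists s, is_lub S s.

Definition bottom (b : T) : Prop := forall x, le b x.
Definition top (t : T) : Prop := forall x, le x t.
Definition has_bottom_top : Prop := (exists b, bottom b) /\ (exists t, top t).

Definition atom (p : T) : Prop :=
  ~ bottom p /\ forall q, le q p -> bottom q \/ q = p.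

Definition covers (a b : T) : Prop :=
  lt a b /\ forall c, le a c -> le c b -> c = a \/ c = b.

Definition atomistic : Prop :=
  forall a, is_lub (fun p => atom p /\ le p a) a.

Definition pair_set (a b : T) : T -> Prop := fun x => x = a \/ x = b.

Definition covering_property : Prop :=
  forall p a j, atom p -> ~ le p a -> is_lub (pair_set a p) j -> covers a j.

Definition has_chain (A : T -> Prop) (n : nat) : Prop :=
  exists c : nat -> T, (forall i, i <= n -> A (c i)) /\
                       (forall i, i < n -> lt (c i) (c (S i))).

Definition length_eq (S : T -> Prop) (n : nat) : Prop :=
  has_chain S n /\ forall m, has_chain S m -> m <= n.

End LatticeNotions.

Definition coatom (T : Type) (le : T -> T -> Prop) := atom (dual le).

Definition DAC (T : Type) (le : T -> T -> Prop) : Prop :=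
  partial_order le /\ (forall a b, exists j, is_lub le (pair_set a b) j) /\
  (forall a b, exists m, is_lub (dual le) (pair_set a b) m) /\
  has_bottom_top le /\
  atomistic le /\ covering_property le /\
  atomistic (dual le) /\ covering_property (dual le).

Definition Cal0Sym_obj (T : Type) (le : T -> T -> Prop) : Prop :=
  partial_order le /\ complete le /\ atomistic le /\ atomistic (dual le) /\
  (forall x y, coatom le x -> coatom le y ->
     exists p, atom le p /\ ~ le p x /\ ~ le p y) /\
  (forall p q, atom le p -> atom le q ->
     exists x, coatom le x /\ ~ le p x /\ ~ le q x).

Definition image (T1 T2 : Type) (f : T1 -> T2) (S : T1 -> Prop) : T2 -> Prop :=
  fun y => exists x, S x /\ y = f x.

(* arrows of Cal^0_Sym from (T1,le1) to (T2,le2);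
   f°(b) := \/ {a ; f a <= b}, required to be a coatom or 1 for every coatom b *)
Definition Cal0Sym_arrow (T1 T2 : Type) (le1 : T1 -> T1 -> Prop)
  (le2 : T2 -> T2 -> Prop) (f : T1 -> T2) : Prop :=
  (forall S s, is_lub le1 S s -> is_lub le2 (image f S) (f s)) /\
  (forall p, atom le1 p -> atom le2 (f p) \/ bottom le2 (f p)) /\
  (forall b c, coatom le2 b -> is_lub le1 (fun a => le2 (f a) b) c ->
     coatom le1 c \/ top le1 c).

From Stdlib Require Import Classical Lia.

(* Since f turns joins of L1 into meets of L2 and its image has length 2, every
   value f a is 1, a coatom, or the least value m := f 1; and m is the meet of two
   distinct coatoms x2, y2.  The dual covering property then makes m covered by
   every coatom above it, so two coatoms above m sharing an atom q with q ≰ m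
   coincide.  For such q, z := f°(q) is a coatom of L1 and f z is the unique coatom
   above m containing q; hence every coatom above m is a value of f at a coatom.
   Choosing coatoms x1, y1 with f x1 = x2 and f y1 = y2, the atoms below x1 ∧ y1 are
   sent to 1, every f°(q) lies above x1 ∧ y1, and the same covering argument in L1
   shows that f is a bijection from the coatoms above x1 ∧ y1 onto those above m;
   this bijection is the required h. *)

Set Implicit Arguments.
Unset Strict Implicit.

(* The paper's ∗-coatom condition, for a coatom X of L1 ⊛ L2 given as a relation
   between atoms of L1 and atoms of L2. *)
Definition star_coatom (T1 T2 : Type) (le1 : T1 -> T1 -> Prop) (le2 : T2 -> T2 -> Prop)
  (X : T1 -> T2 -> Prop) : Prop :=
  exists (x1 y1 : T1) (x2 y2 : T2) (m1 : T1) (m2 : T2) (h : T1 -> T2),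
    coatom le1 x1 /\ coatom le1 y1 /\ x1 <> y1 /\
    coatom le2 x2 /\ coatom le2 y2 /\ x2 <> y2 /\
    is_lub (dual le1) (pair_set x1 y1) m1 /\
    is_lub (dual le2) (pair_set x2 y2) m2 /\
    (forall z, coatom le1 z -> le1 m1 z -> coatom le2 (h z) /\ le2 m2 (h z)) /\
    (forall z z', coatom le1 z -> le1 m1 z -> coatom le1 z' -> le1 m1 z' ->
        h z = h z' -> z = z') /\
    (forall w, coatom le2 w -> le2 m2 w ->
        exists z, coatom le1 z /\ le1 m1 z /\ h z = w) /\
    (forall p q, X p q <->
       (exists z, coatom le1 z /\ le1 m1 z /\
          atom le1 p /\ le1 p z /\ atom le2 q /\ le2 q (h z))).

Lemma in_image (T1 T2 : Type) (f : T1 -> T2) a : image f (fun _ => True) (f a).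
Proof. exists a; split; [exact I | reflexivity]. Qed.

Lemma has_chain_3 (T : Type) (le : T -> T -> Prop) (A : T -> Prop) c0 c1 c2 c3 :
  A c0 -> A c1 -> A c2 -> A c3 -> lt le c0 c1 -> lt le c1 c2 -> lt le c2 c3 ->
  has_chain le A 3.
Proof.
  intros. exists (fun i => match i with 0 => c0 | 1 => c1 | 2 => c2 | _ => c3 end).
  split; intros [|[|[|i]]] Hi; simpl; try assumption; exfalso; lia.
Qed.

Section PairLubs.
Variables (T : Type) (le : T -> T -> Prop).

Lemma is_lub_pair_l a b j : is_lub le (pair_set a b) j -> le a j.
Proof. intros [U _]; apply U; left; reflexivity. Qed.

Lemma is_lub_pair_r a b j : is_lub le (pair_set a b) j -> le b j.
Proof. intros [U _]; apply U; right; reflexivity. Qed.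

Lemma is_lub_pair_least a b j y :
  is_lub le (pair_set a b) j -> le a y -> le b y -> le j y.
Proof. intros [_ V] Ha Hb; apply V; intros x [-> | ->]; assumption. Qed.

End PairLubs.

Section Coatoms.
Variables (T : Type) (le : T -> T -> Prop).

Lemma coatom_not_top x : coatom le x -> ~ top le x.
Proof. intros [H _]; exact H. Qed.

Lemma coatom_le x y : coatom le x -> le x y -> top le y \/ y = x.
Proof. intros [_ H] Hxy; exact (H y Hxy). Qed.

Lemma coatom_le_eq x y : coatom le x -> coatom le y -> le x y -> x = y.
Proof.
  intros Hx Hy Hxy. destruct (coatom_le Hx Hxy) as [Ht | E].
  - exfalso; exact (coatom_not_top Hy Ht).
  - symmetry; exact E.
Qed.

Lemma coatom_not_below m c : ~ top le m -> ~ coatom le m -> coatom le c -> ~ le c m.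
Proof.
  intros Hnt Hnc Hc Hcm. destruct (coatom_le Hc Hcm) as [Ht | ->].
  - exact (Hnt Ht).
  - exact (Hnc Hc).
Qed.

Hypothesis le_transitive : forall a b c, le a b -> le b c -> le a c.
Hypothesis le_antisymmetric : forall a b, le a b -> le b a -> a = b.

Lemma below_chain_not_top_coatom c0 c1 c2 m :
  lt (dual le) c0 c1 -> lt (dual le) c1 c2 -> le m c2 -> ~ top le m /\ ~ coatom le m.
Proof.
  intros [H01 N01] [H12 N12] Hm. split.
  - intros Ht. apply N12, le_antisymmetric; [exact (le_transitive (Ht c1) Hm) | exact H12].
  - intros Hc. destruct (coatom_le Hc (le_transitive Hm H12)) as [Ht | E].
    + apply N01, le_antisymmetric; [exact (Ht c0) | exact H01].
    + apply N12, le_antisymmetric; [rewrite E; exact Hm | exact H12].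
Qed.

Hypothesis le_atomistic : atomistic le.

Lemma atom_below_not_le e m : ~ le e m -> exists q, atom le q /\ le q e /\ ~ le q m.
Proof.
  intros Hem. apply NNPP; intros Hn. apply Hem.
  destruct (le_atomistic e) as [_ V]. apply V. intros q [Hq Hqe].
  apply NNPP; intros Hqm. apply Hn. exists q; auto.
Qed.

Hypothesis le_meet : forall a b, exists m, is_lub (dual le) (pair_set a b) m.
Hypothesis dual_covering : covering_property (dual le).

Lemma meet_coatom_covered p a j :
  coatom le p -> ~ le a p -> is_lub (dual le) (pair_set a p) j -> covers le j a.
Proof.
  intros Hp Hap Hj. destruct (dual_covering Hp Hap Hj) as [[Hja Hne] C].
  split; [split; [exact Hja | intros E; exact (Hne (eq_sym E))] |].
  intros c Hjc Hca. destruct (C c Hca Hjc) as [E | E]; [right | left]; exact E.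
Qed.

Lemma meet_coatoms_covered x y m w :
  coatom le x -> coatom le y -> x <> y -> is_lub (dual le) (pair_set x y) m ->
  coatom le w -> le m w -> covers le m w.
Proof.
  intros Hx Hy Hxy Hm Hw Hmw.
  assert (Cx := meet_coatom_covered Hy (fun H => Hxy (coatom_le_eq Hx Hy H)) Hm).
  destruct (classic (w = x)) as [-> | Hwx]; [exact Cx |].
  destruct (le_meet w x) as [j Hj].
  assert (Cj := meet_coatom_covered Hx (fun H => Hwx (coatom_le_eq Hw Hx H)) Hj).
  destruct Cx as [_ Cx].
  destruct (Cx j (is_lub_pair_least Hj Hmw (is_lub_pair_l Hm)) (is_lub_pair_r Hj))
    as [<- | ->]; [exact Cj |].
  exfalso; apply Hwx; symmetry; exact (coatom_le_eq Hx Hw (is_lub_pair_l Hj)).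
Qed.

Lemma coatoms_above_meet_eq x y m c w q :
  coatom le x -> coatom le y -> x <> y -> is_lub (dual le) (pair_set x y) m ->
  coatom le c -> coatom le w -> le m c -> le m w ->
  le q c -> le q w -> ~ le q m -> c = w.
Proof.
  intros Hx Hy Hxy Hm Hc Hw Hmc Hmw Hqc Hqw Hqm.
  destruct (meet_coatoms_covered Hx Hy Hxy Hm Hw Hmw) as [_ Cw].
  destruct (le_meet c w) as [u Hu].
  destruct (Cw u (is_lub_pair_least Hu Hmc Hmw) (is_lub_pair_r Hu)) as [-> | ->].
  - exfalso; exact (Hqm (is_lub_pair_least Hu Hqc Hqw)).
  - symmetry; exact (coatom_le_eq Hw Hc (is_lub_pair_l Hu)).
Qed.

End Coatoms.

Section LengthTwoArrow.
Variables (T1 T2 : Type) (le1 : T1 -> T1 -> Prop) (le2 : T2 -> T2 -> Prop) (f : T1 -> T2).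
Hypothesis le1_refl : forall a, le1 a a.
Hypothesis f_lub : forall S s, is_lub le1 S s -> is_lub (dual le2) (image f S) (f s).

Lemma f_antitone a b : le1 a b -> le2 (f b) (f a).
Proof.
  intros Hab. assert (Hb : is_lub le1 (pair_set a b) b).
  { split; [intros x [-> | ->]; [exact Hab | apply le1_refl] |].
    intros y Hy; apply Hy; right; reflexivity. }
  destruct (f_lub Hb) as [U _]. apply U. exists a; split; [left |]; reflexivity.
Qed.

Lemma f_glb_of_join a b j y :
  is_lub le1 (pair_set a b) j -> le2 y (f a) -> le2 y (f b) -> le2 y (f j).
Proof.
  intros Hj Ha Hb. destruct (f_lub Hj) as [_ V]. apply V.
  intros x [c [[-> | ->] ->]]; assumption.
Qed.

Lemma f_empty_lub_top b : is_lub le1 (fun _ => False) b -> top le2 (f b).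
Proof. intros Hb y. destruct (f_lub Hb) as [_ V]. apply V. intros x [c [[] _]]. Qed.

Hypothesis le1_atomistic : atomistic le1.

Lemma f_le_of_atoms a y : (forall p, atom le1 p -> le1 p a -> le2 y (f p)) -> le2 y (f a).
Proof.
  intros Hy. destruct (f_lub (le1_atomistic a)) as [_ V]. apply V.
  intros x [p [[Hp Hpa] ->]]. exact (Hy p Hp Hpa).
Qed.

Lemma exists_atom_image_not_top a :
  ~ top le2 (f a) -> exists p, atom le1 p /\ le1 p a /\ ~ top le2 (f p).
Proof.
  intros Hnt. apply NNPP; intros Hn. apply Hnt; intros y. apply f_le_of_atoms.
  intros p Hp Hpa. apply NNPP; intros Hy. apply Hn.
  exists p; split; [exact Hp | split; [exact Hpa | intros Ht; exact (Hy (Ht y))]].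
Qed.

Hypothesis le2_refl : forall a, le2 a a.
Hypothesis le2_trans : forall a b c, le2 a b -> le2 b c -> le2 a c.
Hypothesis le2_antisym : forall a b, le2 a b -> le2 b a -> a = b.
Hypothesis le1_trans : forall a b c, le1 a b -> le1 b c -> le1 a c.
Hypothesis le1_complete : complete le1.
Hypothesis le1_join : forall a b, exists j, is_lub le1 (pair_set a b) j.
Hypothesis le1_meet : forall a b, exists m, is_lub (dual le1) (pair_set a b) m.
Hypothesis le1_dual_covering : covering_property (dual le1).
Hypothesis le2_atomistic : atomistic le2.
Hypothesis le2_meet : forall a b, exists m, is_lub (dual le2) (pair_set a b) m.
Hypothesis le2_dual_covering : covering_property (dual le2).
Hypothesis f_atom : forall p, atom le1 p -> coatom le2 (f p) \/ top le2 (f p).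
Hypothesis f_residual : forall q z,
  atom le2 q -> is_lub le1 (fun a => le2 q (f a)) z -> coatom le1 z \/ top le1 z.
Variable t1 : T1.
Hypothesis t1_top : top le1 t1.
Hypothesis image_length : length_eq (dual le2) (image f (fun _ => True)) 2.

Lemma f_top_le a : le2 (f t1) (f a).
Proof. exact (f_antitone (t1_top a)). Qed.

Lemma image_trichotomy a : top le2 (f a) \/ coatom le2 (f a) \/ f a = f t1.
Proof.
  destruct (classic (top le2 (f a))) as [Ht | Hnt]; [left; exact Ht | right].
  destruct (exists_atom_image_not_top Hnt) as [p [Hp [Hpa Hpnt]]].
  destruct (f_atom Hp) as [Hpc | Hpt]; [| contradiction].
  destruct (classic (f a = f p)) as [-> | Hap]; [left; exact Hpc | right].
  apply NNPP; intros Ham.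
  destruct (le1_complete (fun _ => False)) as [b Hb].
  assert (Hbt := f_empty_lub_top Hb).
  destruct image_length as [_ Hmax].
  (* otherwise 1 > f p > f a > f 1 is a chain of length 3 in the image *)
  assert (H3 : has_chain (dual le2) (image f (fun _ => True)) 3).
  { apply (has_chain_3 (in_image f b) (in_image f p) (in_image f a) (in_image f t1)).
    - split; [exact (Hbt (f p)) | intros E; apply (coatom_not_top Hpc); rewrite <- E; exact Hbt].
    - split; [exact (f_antitone Hpa) | intros E; exact (Hap (eq_sym E))].
    - split; [exact (f_top_le a) | exact Ham]. }
  specialize (Hmax 3 H3); lia.
Qed.

Lemma min_image_not_top_coatom : ~ top le2 (f t1) /\ ~ coatom le2 (f t1).
Proof.
  destruct image_length as [[c [Hin Hlt]] _].
  destruct (Hin 2 (le_n 2)) as [a2 [_ E2]].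
  apply (below_chain_not_top_coatom le2_trans le2_antisym (Hlt 0 ltac:(lia)) (Hlt 1 ltac:(lia))).
  rewrite E2; apply f_top_le.
Qed.

Lemma coatom_not_le_min_image c : coatom le2 c -> ~ le2 c (f t1).
Proof. destruct min_image_not_top_coatom as [Hnt Hnc]. exact (coatom_not_below Hnt Hnc). Qed.

Lemma atom_image_not_le_min_image p : atom le1 p -> ~ le2 (f p) (f t1).
Proof.
  intros Hp. destruct (f_atom Hp) as [Hc | Ht]; [exact (coatom_not_le_min_image Hc) |].
  intros H. apply (proj1 min_image_not_top_coatom). intros y. exact (le2_trans (Ht y) H).
Qed.

Lemma coatom_image_not_top z : coatom le1 z -> ~ top le2 (f z).
Proof.
  intros Hz Htz.
  assert (Ht1z : ~ le1 t1 z).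
  { intros H; apply (coatom_not_top Hz); intros y; exact (le1_trans (t1_top y) H). }
  destruct (atom_below_not_le le1_atomistic Ht1z) as [r [Hr [_ Hrz]]].
  destruct (le1_join z r) as [j Hj].
  destruct (coatom_le Hz (is_lub_pair_l Hj)) as [Hjt | Ejz].
  - apply (atom_image_not_le_min_image Hr). apply le2_trans with (f j).
    + exact (f_glb_of_join Hj (Htz _) (le2_refl _)).
    + exact (f_antitone (Hjt t1)).
  - apply Hrz. rewrite <- Ejz. exact (is_lub_pair_r Hj).
Qed.

Lemma atoms_with_distinct_coatom_images : exists p p',
  atom le1 p /\ atom le1 p' /\ coatom le2 (f p) /\ coatom le2 (f p') /\ f p <> f p'.
Proof.
  destruct min_image_not_top_coatom as [Hnt Hnc].
  destruct (exists_atom_image_not_top Hnt) as [p [Hp [_ Hpnt]]].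
  assert (Hpc : coatom le2 (f p)) by (destruct (f_atom Hp); [assumption | contradiction]).
  apply NNPP; intros Hn. apply Hnc.
  replace (f t1) with (f p); [exact Hpc |].
  apply le2_antisym; [| apply f_top_le].
  apply f_le_of_atoms. intros p' Hp' _.
  destruct (f_atom Hp') as [Hp'c | Hp't]; [| exact (Hp't _)].
  destruct (classic (f p = f p')) as [-> | Hne]; [apply le2_refl |].
  exfalso; apply Hn; exists p, p'.
  do 4 (split; [assumption |]); assumption.
Qed.

Lemma min_image_meet_of_coatoms : exists x2 y2,
  coatom le2 x2 /\ coatom le2 y2 /\ x2 <> y2 /\ is_lub (dual le2) (pair_set x2 y2) (f t1).
Proof.
  destruct atoms_with_distinct_coatom_images as [p [p' [_ [_ [Hc [Hc' Hne]]]]]].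
  exists (f p), (f p'). do 3 (split; [assumption |]).
  destruct (le1_join p p') as [j Hj].
  assert (Hjp := f_antitone (is_lub_pair_l Hj)).
  assert (Hjp' := f_antitone (is_lub_pair_r Hj)).
  assert (Ej : f j = f t1).
  { destruct (image_trichotomy j) as [Ht | [Hjc | E]]; [exfalso | exfalso | exact E].
    - apply (coatom_not_top Hc). intros y; exact (le2_trans (Ht y) Hjp).
    - apply Hne. rewrite <- (coatom_le_eq Hjc Hc Hjp). exact (coatom_le_eq Hjc Hc' Hjp'). }
  rewrite <- Ej. split.
  - intros x [-> | ->]; assumption.
  - intros y Hy. exact (f_glb_of_join Hj (Hy _ (or_introl eq_refl)) (Hy _ (or_intror eq_refl))).
Qed.

Lemma coatoms_above_min_image_eq c w q :
  coatom le2 c -> coatom le2 w -> le2 (f t1) c -> le2 (f t1) w ->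
  le2 q c -> le2 q w -> ~ le2 q (f t1) -> c = w.
Proof.
  destruct min_image_meet_of_coatoms as [x2 [y2 [Hx [Hy [Hxy Hm]]]]].
  exact (coatoms_above_meet_eq le2_meet le2_dual_covering Hx Hy Hxy Hm).
Qed.

Lemma coatom_fiber_lub q : atom le2 q -> ~ le2 q (f t1) -> exists z,
  is_lub le1 (fun a => le2 q (f a)) z /\ coatom le1 z /\ coatom le2 (f z) /\ le2 q (f z).
Proof.
  intros Hq Hqm. destruct (le1_complete (fun a => le2 q (f a))) as [z Hz].
  assert (Hqz : le2 q (f z)).
  { destruct (f_lub Hz) as [_ V]. apply V. intros x [a [Ha ->]]. exact Ha. }
  assert (Hzc : coatom le1 z).
  { destruct (f_residual Hq Hz) as [Hc | Ht]; [exact Hc | exfalso].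
    exact (Hqm (le2_trans Hqz (f_antitone (Ht t1)))). }
  exists z; split; [exact Hz | split; [exact Hzc | split; [| exact Hqz]]].
  destruct (image_trichotomy z) as [Ht | [Hc | E]].
  - exfalso; exact (coatom_image_not_top Hzc Ht).
  - exact Hc.
  - exfalso; apply Hqm; rewrite <- E; exact Hqz.
Qed.

Lemma coatom_above_min_image_preimage c : coatom le2 c -> le2 (f t1) c ->
  exists q z, is_lub le1 (fun a => le2 q (f a)) z /\ coatom le1 z /\ f z = c.
Proof.
  intros Hc Hmc.
  destruct (atom_below_not_le le2_atomistic (coatom_not_le_min_image Hc)) as [q [Hq [Hqc Hqm]]].
  destruct (coatom_fiber_lub Hq Hqm) as [z [Hz [Hzc [Hfz Hqz]]]].
  exists q, z; split; [exact Hz | split; [exact Hzc |]].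
  exact (coatoms_above_min_image_eq Hfz Hc (f_top_le z) Hmc Hqz Hqc Hqm).
Qed.

Section MeetOfPreimages.
Variables x1 y1 m1 : T1.
Hypothesis x1_coatom : coatom le1 x1.
Hypothesis y1_coatom : coatom le1 y1.
Hypothesis fx1_coatom : coatom le2 (f x1).
Hypothesis fy1_coatom : coatom le2 (f y1).
Hypothesis fx1_neq_fy1 : f x1 <> f y1.
Hypothesis m1_meet : is_lub (dual le1) (pair_set x1 y1) m1.
Hypothesis min_image_meet : is_lub (dual le2) (pair_set (f x1) (f y1)) (f t1).

Lemma image_top_below_meet p : atom le1 p -> le1 p m1 -> top le2 (f p).
Proof.
  intros Hp Hpm.
  assert (Hx := f_antitone (le1_trans Hpm (is_lub_pair_l m1_meet))).
  assert (Hy := f_antitone (le1_trans Hpm (is_lub_pair_r m1_meet))).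
  destruct (coatom_le fx1_coatom Hx) as [Ht | Ex]; [exact Ht |].
  destruct (coatom_le fy1_coatom Hy) as [Ht | Ey]; [exact Ht |].
  exfalso; apply fx1_neq_fy1; rewrite <- Ex; exact Ey.
Qed.

Lemma meet_le_fiber_lub q z : is_lub le1 (fun a => le2 q (f a)) z -> le1 m1 z.
Proof.
  intros [Uz _]. destruct (le1_atomistic m1) as [_ V]. apply V.
  intros p [Hp Hpm]. apply Uz. exact (image_top_below_meet Hp Hpm q).
Qed.

Lemma coatom_above_meet_image_coatom z : coatom le1 z -> le1 m1 z -> coatom le2 (f z).
Proof.
  intros Hz Hmz.
  destruct (exists_atom_image_not_top (coatom_image_not_top Hz)) as [p [Hp [Hpz Hpnt]]].
  destruct (atom_below_not_le le2_atomistic (atom_image_not_le_min_image Hp))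
    as [q [Hq [Hqp Hqm]]].
  destruct (coatom_fiber_lub Hq Hqm) as [w [Hw [Hwc [Hfw _]]]].
  assert (Hpm : ~ le1 p m1) by (intros H; exact (Hpnt (image_top_below_meet Hp H))).
  rewrite (coatoms_above_meet_eq le1_meet le1_dual_covering x1_coatom y1_coatom
    (fun E => fx1_neq_fy1 (f_equal f E)) m1_meet Hz Hwc Hmz (meet_le_fiber_lub Hw)
    Hpz (proj1 Hw p Hqp) Hpm).
  exact Hfw.
Qed.

Lemma image_injective_above_meet z z' :
  coatom le1 z -> le1 m1 z -> coatom le1 z' -> f z = f z' -> z = z'.
Proof.
  intros Hz Hmz Hz' E.
  destruct (atom_below_not_le le2_atomistic
    (coatom_not_le_min_image (coatom_above_meet_image_coatom Hz Hmz))) as [q [Hq [Hqz Hqm]]].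
  destruct (coatom_fiber_lub Hq Hqm) as [w [Hw [Hwc _]]].
  rewrite (coatom_le_eq Hz Hwc (proj1 Hw z Hqz)).
  symmetry; apply (coatom_le_eq Hz' Hwc), (proj1 Hw).
  rewrite <- E; exact Hqz.
Qed.

Lemma image_surjective_above_meet w :
  coatom le2 w -> le2 (f t1) w -> exists z, coatom le1 z /\ le1 m1 z /\ f z = w.
Proof.
  intros Hw Hmw. destruct (coatom_above_min_image_preimage Hw Hmw) as [q [z [Hz [Hzc <-]]]].
  exists z; split; [exact Hzc | split; [exact (meet_le_fiber_lub Hz) | reflexivity]].
Qed.

Lemma atom_pair_below_image_above_meet p q :
  atom le1 p -> atom le2 q -> le2 q (f p) ->
  exists z, coatom le1 z /\ le1 m1 z /\ le1 p z /\ le2 q (f z).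
Proof.
  intros Hp Hq Hqp.
  destruct (classic (le2 q (f t1))) as [Hqm | Hqm].
  - destruct (atom_below_not_le le2_atomistic (atom_image_not_le_min_image Hp))
      as [q' [Hq' [Hq'p Hq'm]]].
    destruct (coatom_fiber_lub Hq' Hq'm) as [z [Hz [Hzc _]]].
    exists z; split; [exact Hzc | split; [exact (meet_le_fiber_lub Hz) |]].
    exact (conj (proj1 Hz p Hq'p) (le2_trans Hqm (f_top_le z))).
  - destruct (coatom_fiber_lub Hq Hqm) as [z [Hz [Hzc [_ Hqz]]]].
    exists z; split; [exact Hzc | split; [exact (meet_le_fiber_lub Hz) |]].
    exact (conj (proj1 Hz p Hqp) Hqz).
Qed.

Lemma star_coatom_of_meet :
  star_coatom le1 le2 (fun p q => atom le1 p /\ atom le2 q /\ le2 q (f p)).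
Proof.
  exists x1, y1, (f x1), (f y1), m1, (f t1), f.
  split; [exact x1_coatom |]. split; [exact y1_coatom |].
  split; [exact (fun E => fx1_neq_fy1 (f_equal f E)) |].
  split; [exact fx1_coatom |]. split; [exact fy1_coatom |]. split; [exact fx1_neq_fy1 |].
  split; [exact m1_meet |]. split; [exact min_image_meet |].
  split; [intros z Hz Hmz; exact (conj (coatom_above_meet_image_coatom Hz Hmz) (f_top_le z)) |].
  split; [intros z z' Hz Hmz Hz' _; exact (image_injective_above_meet Hz Hmz Hz') |].
  split; [exact image_surjective_above_meet |].
  intros p q; split.
  - intros [Hp [Hq Hqp]].
    destruct (atom_pair_below_image_above_meet Hp Hq Hqp) as [z [Hz [Hmz [Hpz Hqz]]]].
    exists z; repeat (split; [assumption |]); assumption.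
  - intros [z [_ [_ [Hp [Hpz [Hq Hqz]]]]]].
    exact (conj Hp (conj Hq (le2_trans Hqz (f_antitone Hpz)))).
Qed.

End MeetOfPreimages.

Lemma length_two_arrow_star_coatom :
  star_coatom le1 le2 (fun p q => atom le1 p /\ atom le2 q /\ le2 q (f p)).
Proof.
  destruct min_image_meet_of_coatoms as [x2 [y2 [Hx2 [Hy2 [Hxy2 Hm2]]]]].
  destruct (coatom_above_min_image_preimage Hx2 (is_lub_pair_l Hm2)) as [_ [x1 [_ [Hx1 <-]]]].
  destruct (coatom_above_min_image_preimage Hy2 (is_lub_pair_r Hm2)) as [_ [y1 [_ [Hy1 <-]]]].
  destruct (le1_meet x1 y1) as [m1 Hm1].
  exact (star_coatom_of_meet Hx1 Hy1 Hx2 Hy2 Hxy2 Hm1 Hm2).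
Qed.

End LengthTwoArrow.

Theorem lemma8p2 (T1 T2 : Type) (le1 : T1 -> T1 -> Prop) (le2 : T2 -> T2 -> Prop)
  (f : T1 -> T2) :
  Cal0Sym_obj le1 -> Cal0Sym_obj le2 -> DAC le1 -> DAC le2 ->
  Cal0Sym_arrow le1 (dual le2) f ->
  length_eq (dual le2) (image f (fun _ => True)) 2 ->
  exists (x1 y1 : T1) (x2 y2 : T2) (m1 : T1) (m2 : T2) (h : T1 -> T2),
    coatom le1 x1 /\ coatom le1 y1 /\ x1 <> y1 /\
    coatom le2 x2 /\ coatom le2 y2 /\ x2 <> y2 /\
    is_lub (dual le1) (pair_set x1 y1) m1 /\
    is_lub (dual le2) (pair_set x2 y2) m2 /\
    (* h is a bijection  Sigma'[x1 /\ y1] -> Sigma'[x2 /\ y2] *)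
    (forall z, coatom le1 z -> le1 m1 z -> coatom le2 (h z) /\ le2 m2 (h z)) /\
    (forall z z', coatom le1 z -> le1 m1 z -> coatom le1 z' -> le1 m1 z' ->
        h z = h z' -> z = z') /\
    (forall w, coatom le2 w -> le2 m2 w ->
        exists z, coatom le1 z /\ le1 m1 z /\ h z = w) /\
    (* X = \bigcup { Sigma[z] x Sigma[h z] ; z in Sigma'[x1 /\ y1] } *)
    (forall p q,
       (atom le1 p /\ atom le2 q /\ le2 q (f p)) <->
       (exists z, coatom le1 z /\ le1 m1 z /\
          atom le1 p /\ le1 p z /\ atom le2 q /\ le2 q (h z))).
Proof.
  intros [[refl1 [trans1 _]] [cmp1 [at1 _]]] [[refl2 [trans2 anti2]] [_ [at2 _]]]
    [_ [join1 [meet1 [[_ [t1 Ht1]] [_ [_ [_ dcov1]]]]]]]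
    [_ [_ [meet2 [_ [_ [_ [_ dcov2]]]]]]] [f_lub [f_atom f_residual]] Hlen.
  eapply length_two_arrow_star_coatom; eassumption.
Qed.
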